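(* Let $\psi:\mathcal{Q}\to\mathcal{P}$ be a full upper semilattice morphism with $\mathcal{Q}$ finite and $\uparrow\psi(\mathcal{Q})=\mathcal{P}$. For all $A,B\subseteq\mathcal{Q}$ such that every $b\in B$ satisfies $a\le b$ for some $a\in A$, we have \[ \mathrm{Lan}_\psi\big(\mathbb{k}_{\uparrow A\setminus\uparrow B}\big)\cong\mathbb{k}_{\uparrow\psi(A)\setminus\uparrow\psi(B)}, \] where upsets are taken in $\mathcal{Q}$ and $\mathcal{P}$ respectively. In particular, $\mathrm{Lan}_\psi$ maps spread-decomposable representations to spread-decomposable representations.
   Context: Fix a field $\mathbb{k}$. Upper semilattice, full morphism, upper semilattice morphism as usual (joins of finite nonempty sets exist/are preserved; $\psi(q)\le\psi(q')\Rightarrow q\le q'$). $\uparrow X=\{p:\exists x\in X,x\le p\}$. For convex $S$ (i.e. $s\le p\le s'$ with $s,s'\in S$ implies $p\in S$), $\mathbb{k}_S$ is the indicator representation. $\mathrm{Lan}_\psi:\operatorname{rep}\mathcal{Q}\to\operatorname{rep}\mathcal{P}$ is the left adjoint of restriction $M\mapsto M\circ\psi$, and equals precomposition with $\lfloor-\rfloor_\psi$, where $\lfloor p\rfloor_\psi=\bigvee\{q:\psi(q)\le p\}$. A spread is a nonempty convex, zigzag-connected subset; a representation is spread-decomposable if it is isomorphic to a finite direct sum of finitely presented spread representations $\mathbb{k}_S$. *)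

From HB Require Import structures.
From mathcomp Require Import all_boot all_order all_algebra.
Set Implicit Arguments. Unset Strict Implicit. Unset Printing Implicit Defensive.
Import Order.TTheory GRing.Theory.
Local Open Scope order_scope.
Delimit Scope ring_scope with R.

(* A vector space at x is k^(rdim x) (row vectors); the structure map for
   x <= y is v |-> v *m rmap x y.  [rmap x y] is only meaningful for x <= y. *)
Record rep (k : fieldType) (T : Type) := Rep {
  rdim : T -> nat;
  rmap : forall x y : T, 'M[k]_(rdim x, rdim y) }.

Definition is_rep (k : fieldType) d (T : porderType d) (M : rep k T) : Prop :=
  (forall x, rmap M x x = (1%:M)%R) /\
  (forall x y z, x <= y -> y <= z -> (rmap M x y *m rmap M y z = rmap M x z)%R).

Definition is_morph (k : fieldType) d (T : porderType d) (M N : rep k T)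
  (f : forall x, 'M[k]_(rdim M x, rdim N x)) : Prop :=
  forall x y, x <= y -> (rmap M x y *m f y = f x *m rmap N x y)%R.

Definition rep_iso (k : fieldType) d (T : porderType d) (M N : rep k T) : Prop :=
  exists (f : forall x, 'M[k]_(rdim M x, rdim N x))
         (g : forall x, 'M[k]_(rdim N x, rdim M x)),
    [/\ is_morph f, is_morph g,
        forall x, (f x *m g x = (1%:M)%R)%R & forall x, (g x *m f x = (1%:M)%R)%R].

Definition convex d (T : porderType d) (S : pred T) : Prop :=
  forall s p s', S s -> S s' -> s <= p -> p <= s' -> S p.

Definition zigzag_connected d (T : porderType d) (S : pred T) : Prop :=
  forall s s', S s -> S s' ->
    exists c : seq T, [/\ all S c, path (fun x y => x >=< y) s c & last s c = s'].

Definition spread d (T : porderType d) (S : pred T) : Prop :=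
  (exists s, S s) /\ convex S /\ zigzag_connected S.

Definition indicator (k : fieldType) (T : Type) (S : pred T) : rep k T :=
  @Rep k T (fun x => if S x then 1%N else 0%N) (fun x y => const_mx 1%R).

Definition rep0 (k : fieldType) (T : Type) : rep k T :=
  @Rep k T (fun _ => 0%N) (fun _ _ => 0%R).

Definition dsum (k : fieldType) (T : Type) (M N : rep k T) : rep k T :=
  @Rep k T (fun x => (rdim M x + rdim N x)%N)
    (fun x y => block_mx (rmap M x y) 0%R 0%R (rmap N x y)).

Definition dsum_seq (k : fieldType) (T : Type) (Ms : seq (rep k T)) : rep k T :=
  foldr (@dsum k T) (rep0 k T) Ms.

Definition upset1 d (T : porderType d) (g : T) : pred T := fun x => g <= x.

Definition free_rep (k : fieldType) d (T : porderType d) (gs : seq T) : rep k T :=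
  dsum_seq [seq indicator k (upset1 g) | g <- gs].

(* finitely presented: cokernel of a morphism of finitely generated frees,
   i.e. there is an exact sequence F1 -> F0 -> M -> 0 *)
Definition fin_pres (k : fieldType) d (T : porderType d) (M : rep k T) : Prop :=
  exists (gs0 gs1 : seq T)
         (f1 : forall x, 'M[k]_(rdim (free_rep k gs1) x, rdim (free_rep k gs0) x))
         (f0 : forall x, 'M[k]_(rdim (free_rep k gs0) x, rdim M x)),
    [/\ is_morph f1, is_morph f0,
        forall x, row_full (f0 x) &
        forall x, (kermx (f0 x) == f1 x)%MS].

Definition spread_decomposable (k : fieldType) d (T : porderType d) (M : rep k T) : Prop :=
  exists Ss : seq (pred T),
    (forall i, (i < size Ss)%N -> spread (nth (fun _ => false) Ss i) /\ fin_pres (indicator k (nth (fun _ => false) Ss i))) /\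
    rep_iso M (dsum_seq [seq indicator k X | X <- Ss]).

Definition usl_morph dQ dP (Q : joinSemilatticeType dQ) (P : joinSemilatticeType dP)
  (psi : Q -> P) : Prop := forall q q', psi (q `|` q') = psi q `|` psi q'.

Definition full dQ dP (Q : porderType dQ) (P : porderType dP) (psi : Q -> P) : Prop :=
  forall q q', psi q <= psi q' -> q <= q'.

Definition upQ dQ (Q : finPOrderType dQ) (A : {set Q}) : pred Q :=
  fun q => [exists a in A, a <= q].
Definition upP dQ dP (Q : finPOrderType dQ) (P : porderType dP) (psi : Q -> P)
  (A : {set Q}) : pred P := fun p => [exists a in A, psi a <= p].
Definition setdiff (T : Type) (X Y : pred T) : pred T := fun x => X x && ~~ Y x.

Definition floor dQ dP (Q : finJoinSemilatticeType dQ) (P : porderType dP)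
  (psi : Q -> P) (p : P) : option Q :=
  match [pick q | psi q <= p] with
  | Some q0 => Some (\big[Order.join/q0]_(q | psi q <= p) q)
  | None => None
  end.

(* Lan_psi M = M o floor_psi  (precomposition with the floor map) *)
Definition Lan (k : fieldType) dQ dP (Q : finJoinSemilatticeType dQ) (P : porderType dP)
  (psi : Q -> P) (M : rep k Q) : rep k P :=
  @Rep k P (fun p => oapp (rdim M) 0%N (floor psi p))
    (fun p p' =>
       match floor psi p as a, floor psi p' as b
       return 'M[k]_(oapp (rdim M) 0%N a, oapp (rdim M) 0%N b) with
       | Some x, Some y => rmap M x y
       | _, _ => 0%R
       end).

From HB Require Import structures.
From mathcomp Require Import all_boot all_order all_algebra.
From Stdlib Require Import FunctionalExtensionality.
Set Implicit Arguments. Unset Strict Implicit. Unset Printing Implicit Defensive.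
Import Order.TTheory.
Local Open Scope order_scope.

(* Since Q is finite and every p lies above some psi q, the floor map g is
   total, and it is right adjoint to psi: q <= g p iff psi q <= p.  So Lan psi
   is precomposition with the monotone map g, which pulls the indicator of S
   back to the indicator of S o g.  The adjunction turns the upset generated
   by A into the one generated by psi(A) and free representations into free
   ones, and fullness (g o psi = id) lets spreads pull back to spreads. *)

Definition precomp (k : fieldType) (T T' : Type) (M : rep k T) (g : T' -> T) : rep k T' :=
  @Rep k T' (fun x => rdim M (g x)) (fun x y => rmap M (g x) (g y)).

Lemma rep_iso_refl (k : fieldType) d (T : porderType d) (M : rep k T) : rep_iso M M.
Proof.
exists (fun _ => 1%:M%R), (fun _ => 1%:M%R).
by split=> [x y _|x y _|x|x]; rewrite ?mulmx1 ?mul1mx.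
Qed.

Lemma le_big_join d (T : joinSemilatticeType d) (I : finType) (x0 : T)
    (P : pred I) (F : I -> T) i :
  P i -> F i <= \big[Order.join/x0]_(j | P j) F j.
Proof. by move=> Pi; rewrite (big_rem_AC _ _ _ _ (mem_index_enum i)) Pi leUl. Qed.

Lemma usl_morph_homo dQ dP (Q : joinSemilatticeType dQ) (P : joinSemilatticeType dP)
    (psi : Q -> P) :
  usl_morph psi -> {homo psi : q q' / q <= q'}.
Proof. by move=> psiU q q' le_qq'; rewrite -(join_r le_qq') psiU leUl. Qed.

Section Precomposition.

Variables (k : fieldType) (T T' : Type) (g : T' -> T).

Lemma precomp_indicator (S : pred T) :
  precomp (indicator k S) g = indicator k (S \o g).
Proof. by []. Qed.

Lemma precomp_dsum_indicators (I : Type) (F : I -> pred T) (s : seq I) :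
  precomp (dsum_seq [seq indicator k (F i) | i <- s]) g =
  dsum_seq [seq indicator k (F i \o g) | i <- s].
Proof. by elim: s => //= i s IH; rewrite -IH. Qed.

End Precomposition.

Lemma rep_iso_precomp (k : fieldType) d d' (T : porderType d) (T' : porderType d')
    (g : T' -> T) (M N : rep k T) :
  {homo g : x y / x <= y} -> rep_iso M N -> rep_iso (precomp M g) (precomp N g).
Proof.
move=> g_homo [f [h [f_morph h_morph fh hf]]].
exists (fun x => f (g x)), (fun x => h (g x)).
by split=> [x y /g_homo/f_morph|x y /g_homo/h_morph|x|x] //; [exact: fh | exact: hf].
Qed.

Section GaloisConnection.

Variables (dQ dP : Order.disp_t) (Q : porderType dQ) (P : porderType dP).
Variables (psi : Q -> P) (g : P -> Q).
Hypothesis psi_g : forall q p, (q <= g p) = (psi q <= p).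

Lemma galois_counit p : psi (g p) <= p.
Proof. by rewrite -psi_g. Qed.

Lemma galois_homo_left : {homo psi : q q' / q <= q'}.
Proof. by move=> q q' le_qq'; rewrite -psi_g (le_trans le_qq') // psi_g. Qed.

Lemma galois_homo_right : {homo g : p p' / p <= p'}.
Proof. by move=> p p' le_pp'; rewrite psi_g (le_trans (galois_counit p)). Qed.

Lemma free_rep_precomp (k : fieldType) (gs : seq Q) :
  precomp (free_rep k gs) g = free_rep k (map psi gs).
Proof.
rewrite /free_rep precomp_dsum_indicators -map_comp; congr (dsum_seq _).
apply: eq_map => a /=; congr (indicator k _).
by apply: functional_extensionality => p; rewrite /= /upset1 psi_g.
Qed.

Lemma fin_pres_precomp (k : fieldType) (M : rep k Q) :
  fin_pres M -> fin_pres (precomp M g).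
Proof.
case=> gs0 [gs1 [f1 [f0 [f1_morph f0_morph f0_full f0_ker]]]].
exists (map psi gs0), (map psi gs1); rewrite -!free_rep_precomp.
exists (fun p => f1 (g p)), (fun p => f0 (g p)).
split=> [p p' /galois_homo_right/f1_morph|p p' /galois_homo_right/f0_morph|p|p] //.
  exact: f0_full.
exact: f0_ker.
Qed.

Hypothesis psi_full : full psi.

Lemma galois_retract : cancel psi g.
Proof.
by move=> q; apply/le_anti; rewrite psi_g lexx andbT; apply: psi_full; rewrite -psi_g.
Qed.

Lemma spread_precomp (S : pred Q) : spread S -> spread (S \o g).
Proof.
case=> [[s Ss] [S_convex S_zigzag]]; split.
  by exists (psi s); rewrite /= galois_retract.
split=> [p p0 p' Sp Sp' le_pp0 le_p0p' | p p' Sp Sp'].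
  exact: S_convex Sp Sp' (galois_homo_right le_pp0) (galois_homo_right le_p0p').
have [c [Sc c_path c_last]] := S_zigzag _ _ Sp Sp'.
exists (psi (g p) :: rcons (map psi c) p'); split.
- rewrite /= all_rcons /= galois_retract all_map; apply/and3P; split=> //.
  by apply: sub_all Sc => x; rewrite /= galois_retract.
- rewrite /= rcons_path last_map c_last path_map.
  rewrite ge_comparable ?le_comparable ?galois_counit //= andbT.
  apply: sub_path c_path => x y /orP[le_xy|le_yx] /=.
    by rewrite le_comparable // galois_homo_left.
  by rewrite ge_comparable // galois_homo_left.
- by rewrite /= last_rcons.
Qed.

Lemma spread_decomposable_precomp (k : fieldType) (M : rep k Q) :
  spread_decomposable M -> spread_decomposable (precomp M g).
Proof.
case=> Ss [Ss_spread M_iso]; exists [seq X \o g | X <- Ss]; split.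
  move=> i; rewrite size_map => lt_i; rewrite (nth_map (fun _ => false)) //.
  have [X_spread X_fin_pres] := Ss_spread i lt_i.
  by split; [exact: spread_precomp | exact: fin_pres_precomp X_fin_pres].
rewrite -map_comp -(precomp_dsum_indicators _ g id).
exact: rep_iso_precomp galois_homo_right M_iso.
Qed.

End GaloisConnection.

Section TotalFloor.

Variables (dQ dP : Order.disp_t) (Q : finJoinSemilatticeType dQ).
Variables (P : joinSemilatticeType dP) (psi : Q -> P).
Hypotheses (psi_morph : usl_morph psi) (psi_up : forall p, exists q, psi q <= p).

(* The default value is never used: see floorE. *)
Definition floorT (p : P) : Q := odflt (xchoose (psi_up p)) (floor psi p).

Lemma floorE p : floor psi p = Some (floorT p).
Proof.
rewrite /floorT /floor; case: pickP => // nolow.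
by have [q le_qp] := psi_up p; have := nolow q; rewrite le_qp.
Qed.

Lemma floorT_adjoint q p : (q <= floorT p) = (psi q <= p).
Proof.
rewrite /floorT /floor; case: pickP => [q0 le_q0p /= | nolow]; last first.
  by have [q1 le_q1p] := psi_up p; have := nolow q1; rewrite le_q1p.
set J := \big[_/_]_(_ | _) _.
have le_Jp : psi J <= p.
  apply: (big_ind (fun x => psi x <= p)) => // x y le_xp le_yp.
  by rewrite psi_morph leUx le_xp le_yp.
apply/idP/idP => [le_qJ | le_qp]; last exact: (le_big_join _ (fun q => q)).
exact: le_trans (usl_morph_homo psi_morph le_qJ) le_Jp.
Qed.

Lemma Lan_precomp (k : fieldType) (M : rep k Q) : Lan psi M = precomp M floorT.
Proof.
rewrite /Lan; move: (floor psi) floorE => h hE.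
by have -> : h = fun p => Some (floorT p) by apply: functional_extensionality.
Qed.

Lemma upQ_floorT (A : {set Q}) p : upQ A (floorT p) = upP psi A p.
Proof. by apply: eq_existsb => a; rewrite floorT_adjoint. Qed.

End TotalFloor.

Theorem mainTheorem9 (k : fieldType) (dQ dP : Order.disp_t)
  (Q : finJoinSemilatticeType dQ) (P : joinSemilatticeType dP) (psi : Q -> P)
  (Hmorph : usl_morph psi) (Hfull : full psi)
  (Hup : forall p : P, exists q : Q, psi q <= p) :
  (forall A B : {set Q},
     (forall b, b \in B -> exists2 a, a \in A & a <= b) ->
     rep_iso (Lan psi (indicator k (setdiff (upQ A) (upQ B))))
             (indicator k (setdiff (upP psi A) (upP psi B)))) /\
  (forall M : rep k Q, is_rep M -> spread_decomposable M ->
     spread_decomposable (Lan psi M)).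
Proof.
have psi_floorT := floorT_adjoint Hmorph Hup.
split=> [A B _ | M _ M_dec]; rewrite Lan_precomp.
  rewrite precomp_indicator.
  have -> : setdiff (upQ A) (upQ B) \o floorT Hup = setdiff (upP psi A) (upP psi B).
    by apply: functional_extensionality => p; rewrite /setdiff /= !upQ_floorT.
  exact: rep_iso_refl.
exact: (spread_decomposable_precomp psi_floorT Hfull M_dec).
Qed.
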